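(* Let $n\ge 3$ and let $\Delta^o(D_{2n})$ be the order super commuting graph of the dihedral group $D_{2n}$. (i) If $n$ is odd, the Sombor spectrum of $\Delta^o(D_{2n})$ consists of $-(n-1)\sqrt2$ with multiplicity $n-2$, $-n\sqrt2$ with multiplicity $n-1$, and the three roots (with multiplicity) of \[x\big(x-(n-1)(n-2)\sqrt2\big)\big(x-n(n-1)\sqrt2\big)-(n-1)(5n^2-6n+2)\big(x-n(n-1)\sqrt2\big)-n(5n^2-4n+1)\big(x-(n-1)(n-2)\sqrt2\big).\] (ii) If $n$ is even, the Sombor spectrum of $\Delta^o(D_{2n})$ consists of $-(2n-1)\sqrt2$ with multiplicity $2n-1$ and $(2n-1)^2\sqrt2$ with multiplicity $1$.
   Context: For a finite simple graph $\Gamma$ with vertices $u_1,\dots,u_N$, the Sombor matrix $S(\Gamma)$ has $(i,j)$ entry $\sqrt{\deg(u_i)^2+\deg(u_j)^2}$ if $u_i,u_j$ are adjacent and $0$ otherwise; the Sombor spectrum is the multiset of its eigenvalues. $D_{2n}=\langle a,b: a^n=b^2=e,\ ba=a^{-1}b\rangle$. The commuting graph $\Delta(G)$ has vertex set $G$, distinct $x,y$ adjacent iff $xy=yx$. The order super commuting graph $\Delta^o(G)$ has vertex set $G$, and distinct $g,h$ are adjacent iff $o(g)=o(h)$ or there exist $g',h'\in G$ with $o(g')=o(g)$, $o(h')=o(h)$ and $g'h'=h'g'$ (with $g'\neq h'$); here $o(x)$ is the order of $x$. *)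

From HB Require Import structures.
From mathcomp Require Import all_boot all_order all_algebra all_fingroup all_solvable.
From mathcomp Require Import all_reals.
Set Implicit Arguments. Unset Strict Implicit. Unset Printing Implicit Defensive.
Import Order.TTheory GRing.Theory Num.Theory.

Definition osc_adj (gT : finGroupType) : rel gT :=
  fun g h => (g != h) &&
    (((#[g]%g) == (#[h]%g))%N ||
     [exists g' : gT, exists h' : gT,
        [&& (#[g']%g) == (#[g]%g), (#[h']%g) == (#[h]%g), (g' * h' == h' * g')%g & g' != h']]).

Definition vdeg (T : finType) (e : rel T) (x : T) : nat := #|[set y | e x y]|.

Definition sombor_matrix (R : realType) (T : finType) (e : rel T) : 'M[R]_#|T| :=
  (\matrix_(i < #|T|, j < #|T|)
    if e (enum_val i) (enum_val j) then
      Num.sqrt ((vdeg e (enum_val i))%:R ^+ 2 + (vdeg e (enum_val j))%:R ^+ 2)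
    else 0)%R.

From HB Require Import structures.
From mathcomp Require Import all_boot all_order all_algebra all_fingroup all_solvable.
From mathcomp Require Import all_reals.
From mathcomp Require Import zify ring.
Import Order.TTheory GRing.Theory Num.Theory.

Set Implicit Arguments.
Unset Strict Implicit.
Unset Printing Implicit Defensive.

(* For odd n the reflections are exactly the involutions of D_2n and a nontrivial
   rotation commutes with no reflection, so two distinct elements are adjacent in
   the order super commuting graph iff one of them is 1, or both are rotations, or
   both are reflections.  For even n the central involution x^(n/2) commutes with
   every element, so the graph is complete.  In both cases adjacency and degrees
   only depend on the class of a vertex in a partition ({1} / rotations /
   reflections, resp. a single class), so the Sombor matrix S vanishes on the
   diagonal and equals K(cl u, cl v) off it.  Sylvester's identity
   det(1 - AB) = det(1 - BA) then gives, for t + K(c,c) invertible,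
     det(t - S) = prod_c (t + K(c,c))^(|c| - 1) * det(t - Q),
   where Q = K diag(|c|) - diag(K(c,c)) is the quotient matrix of the partition.
   Both sides are polynomials in t, so it is enough to compare them for large t. *)

Local Open Scope ring_scope.

Lemma det_id_sub_mulmxC (R : comNzRingType) m k (A : 'M[R]_(m, k)) (B : 'M[R]_(k, m)) :
  \det (1%:M - A *m B) = \det (1%:M - B *m A).
Proof.
have lower : block_mx 1%:M A B 1%:M =
    block_mx 1%:M 0 B 1%:M *m block_mx 1%:M A 0 (1%:M - B *m A).
  by rewrite mulmx_block ?mul1mx ?mul0mx ?mulmx1 ?mulmx0 ?addr0 ?add0r addrC subrK.
have upper : block_mx 1%:M A B 1%:M =
    block_mx (1%:M - A *m B) A 0 1%:M *m block_mx 1%:M 0 B 1%:M.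
  by rewrite mulmx_block ?mul1mx ?mul0mx ?mulmx1 ?mulmx0 ?addr0 ?add0r subrK.
have := congr1 determinant lower.
by rewrite upper !det_mulmx !det_lblock !det_ublock !det1 !mul1r !mulr1.
Qed.

Lemma horner_char_poly (R : comNzRingType) N (A : 'M[R]_N) (t : R) :
  (char_poly A).[t] = \det (t%:M - A).
Proof.
rewrite /char_poly -horner_evalE -det_map_mx; congr determinant.
by apply/matrixP => i j; rewrite !mxE /= horner_evalE hornerD hornerN hornerC hornerMn hornerX.
Qed.

Lemma char_poly_mx11 (R : comNzRingType) (A : 'M[R]_1) : char_poly A = 'X - (A 0 0)%:P.
Proof. by rewrite /char_poly det_mx11 !mxE mulr1n. Qed.

Lemma det_mx33 (R : comNzRingType) (M : 'M[R]_3) :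
  \det M = M 0 0 * M 1 1 * M 2 2 + M 0 1 * M 1 2 * M 2 0 + M 0 2 * M 1 0 * M 2 1
         - M 0 0 * M 1 2 * M 2 1 - M 0 1 * M 1 0 * M 2 2 - M 0 2 * M 1 1 * M 2 0.
Proof.
pose f a b := M (inord a) (inord b).
have Mf i j : M i j = f i j by rewrite /f !inord_val.
rewrite (expand_det_row _ 0) !big_ord_recl big_ord0 /cofactor.
rewrite !(expand_det_row _ 0) !big_ord_recl !big_ord0 /cofactor !det_mx11 !mxE.
by rewrite !Mf /= /bump /=; ring.
Qed.

Lemma eq_poly_gt (R : realDomainType) (a : R) (p q : {poly R}) :
  (forall t, a < t -> p.[t] = q.[t]) -> p = q.
Proof.
move=> pq; apply/eqP; rewrite -subr_eq0; apply: contraT => pq_neq0.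
pose s := [seq a + i.+1%:R | i <- iota 0 (size (p - q))].
have := max_poly_roots pq_neq0 (rs := s).
rewrite size_map size_iota ltnn; apply=> //.
  apply/allP => _ /mapP [i _ ->]; rewrite /root hornerD hornerN pq ?subrr //.
  by rewrite ltrDl ltr0Sn.
by rewrite map_inj_uniq ?iota_uniq // => i j /addrI /eqP; rewrite eqr_nat => /eqP [].
Qed.

Lemma sqrt_sqr_dbl (R : rcfType) (a : R) : 0 <= a ->
  Num.sqrt (a ^+ 2 + a ^+ 2) = a * Num.sqrt 2.
Proof.
by move=> a_ge0; rewrite -mulr2n -[_ *+ 2]mulr_natl sqrtrM ?ler0n // sqrtr_sqr ger0_norm // mulrC.
Qed.

Section ClassMatrix.
Variables (R : fieldType) (T : finType) (k : nat) (cl : T -> 'I_k) (K : 'M[R]_k).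
Local Notation csize c := #|[set u | cl u == c]|.

Definition class_mx : 'M[R]_#|T| :=
  \matrix_(i, j) if i == j then 0 else K (cl (enum_val i)) (cl (enum_val j)).

Definition quotient_mx : 'M[R]_k :=
  K *m diag_mx (\row_c (csize c)%:R) - diag_mx (\row_c K c c).

Lemma card_enum_val_class c :
  #|[pred i : 'I_#|T| | cl (enum_val i) == c]| = csize c.
Proof.
rewrite -(card_imset _ enum_rank_inj); apply: eq_card => i; rewrite inE.
apply/eqP/imsetP => [ci | [u]]; first by exists (enum_val i); rewrite ?inE ?ci ?enum_valK.
by rewrite inE => /eqP <- ->; rewrite enum_rankK.
Qed.

Lemma prod_class (F : 'I_k -> R) :
  \prod_(i < #|T|) F (cl (enum_val i)) = \prod_c F c ^+ csize c.
Proof.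
rewrite (partition_big (cl \o enum_val) predT) //; apply: eq_bigr => c _.
rewrite (eq_bigr (fun=> F c)) => [|i /andP [_ /eqP <-] //].
by rewrite prodr_const -card_enum_val_class.
Qed.

(* With U the 0/1 class-incidence matrix, t - class_mx = E (1 - E^-1 U K U^T) for
   E = diag(t + K(cl i, cl i)); Sylvester's identity turns the second factor into
   a k x k determinant, in which U^T E^-1 U is diagonal. *)
Lemma det_class_mx_sylvester t : (forall c, t + K c c != 0) ->
  \det (t%:M - class_mx) = \prod_c (t + K c c) ^+ csize c *
    \det (1%:M - K *m diag_mx (\row_c ((csize c)%:R / (t + K c c)))).
Proof.
move=> nz; pose clv (i : 'I_#|T|) := cl (enum_val i).
pose U : 'M[R]_(#|T|, k) := \matrix_(i, c) (clv i == c)%:R.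
pose E : 'rV[R]_#|T| := \row_i (t + K (clv i) (clv i)).
pose Einv : 'rV[R]_#|T| := \row_i (t + K (clv i) (clv i))^-1.
have UK i c : (U *m K) i c = K (clv i) c.
  rewrite mxE (bigD1 (clv i)) //= big1 ?mxE ?eqxx ?mul1r ?addr0 // => c' ne.
  by rewrite mxE eq_sym (negPf ne) mul0r.
have UKU i j : (U *m K *m U^T) i j = K (clv i) (clv j).
  rewrite mxE (bigD1 (clv j)) //= big1 ?UK ?mxE ?eqxx ?mulr1 ?addr0 // => c' ne.
  by rewrite !mxE eq_sym (negPf ne) mulr0.
have -> : t%:M - class_mx = diag_mx E *m (1%:M - (diag_mx Einv *m U) *m (K *m U^T)).
  rewrite mulmxBr mulmx1 !mulmxA mulmx_diag.
  have -> : diag_mx (\row_j (E 0 j * Einv 0 j)) = 1%:M.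
    by apply/matrixP => i j; rewrite !mxE divff.
  rewrite mul1mx; apply/matrixP => i j; rewrite [RHS]mxE.
  have -> : (- (U *m K *m U^T)) i j = - K (clv i) (clv j) by rewrite mxE UKU.
  rewrite !mxE.
  by case: eqVneq => [->|] /=; rewrite ?mulr1n ?mulr0n ?subr0 ?sub0r // addrK.
rewrite det_mulmx det_diag det_id_sub_mulmxC; congr (_ * _).
  by rewrite -(prod_class (fun c => t + K c c)); apply: eq_bigr => i _; rewrite mxE.
congr (\det (_ - _)); rewrite -!mulmxA; congr (_ *m _).
rewrite mul_diag_mx; apply/matrixP => c c'; rewrite !mxE.
rewrite (eq_bigr (fun i => if clv i == c then (t + K c c)^-1 *+ (c == c') else 0)).
  rewrite -big_mkcond sumr_const card_enum_val_class -mulrnA mulnC mulrnA.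
  by rewrite mulrC mulr_natr.
move=> i _; rewrite !mxE; case: eqP => [<-|_]; last by rewrite mul0r.
by rewrite mul1r mulr_natr.
Qed.

Lemma det_class_mx t : (forall c, t + K c c != 0) -> (forall c, 0 < csize c)%N ->
  \det (t%:M - class_mx) =
    \prod_c (t + K c c) ^+ (csize c).-1 * \det (t%:M - quotient_mx).
Proof.
move=> nz class_gt0; pose e : 'rV[R]_k := \row_c (t + K c c).
rewrite det_class_mx_sylvester //.
have -> : \prod_c (t + K c c) ^+ csize c =
    \prod_c (t + K c c) ^+ (csize c).-1 * \det (diag_mx e).
  rewrite det_diag -big_split; apply: eq_bigr => c _.
  by rewrite mxE /= -exprSr prednK.
rewrite -mulrA; congr (_ * _).
rewrite mulrC -det_mulmx mulmxBl mul1mx -mulmxA mulmx_diag.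
rewrite (_ : \row_j _ = \row_j (csize j)%:R); last first.
  by apply/rowP => j; rewrite !mxE divfK.
have -> : diag_mx e = t%:M + diag_mx (\row_c K c c).
  by apply/matrixP => a b; rewrite !mxE; case: eqVneq => [->|]; rewrite ?mulr1n ?mulr0n ?addr0.
by rewrite /quotient_mx opprB addrA.
Qed.

End ClassMatrix.

Lemma char_poly_class_mx (R : realFieldType) (T : finType) k (cl : T -> 'I_k)
    (K : 'M[R]_k) :
    (forall c, 0 < #|[set u | cl u == c]|)%N ->
  char_poly (class_mx cl K) =
    \prod_c ('X + (K c c)%:P) ^+ #|[set u | cl u == c]|.-1 * char_poly (quotient_mx cl K).
Proof.
move=> class_gt0; apply: (@eq_poly_gt _ (\sum_c `|K c c|)) => t lt_t.
rewrite hornerM horner_prod !horner_char_poly det_class_mx //.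
  by congr (_ * _); apply: eq_bigr => c _; rewrite horner_exp hornerD hornerX hornerC.
move=> c; rewrite -[K c c]opprK subr_eq0 eq_sym lt_eqF // (le_lt_trans _ lt_t) //.
by rewrite (bigD1 c) //= -normrN ler_wpDr ?sumr_ge0 ?ler_norm.
Qed.

Section ClassGraph.
Variables (T : finType) (k : nat) (cl : T -> 'I_k) (A : rel 'I_k).
Local Notation csize c := #|[set u | cl u == c]|.

Definition class_deg (a : 'I_k) : nat := (\sum_(b | A a b) csize b) - A a a.

Definition class_sombor_mx (R : realType) : 'M[R]_k :=
  \matrix_(a, b)
    if A a b then Num.sqrt ((class_deg a)%:R ^+ 2 + (class_deg b)%:R ^+ 2) else 0.

Lemma class_sombor_mx_diag (R : realType) a :
  A a a -> class_sombor_mx R a a = (class_deg a)%:R * Num.sqrt 2.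
Proof. by move=> Aaa; rewrite mxE Aaa sqrt_sqr_dbl ?ler0n. Qed.

Lemma card_preim_class (P : pred 'I_k) : #|[set v | P (cl v)]| = \sum_(b | P b) csize b.
Proof.
rewrite cardsE -sum1_card (partition_big cl P) //; apply: eq_bigr => b Pb.
rewrite cardsE -sum1_card; apply: eq_bigl => v.
rewrite -!topredE /=; case: (cl v =P b) => [-> | ne]; first by rewrite Pb eqnE eqxx.
by rewrite andbF; apply/esym/eqP => /val_inj.
Qed.

Variable e : rel T.
Hypothesis eE : forall u v, e u v = (u != v) && A (cl u) (cl v).

Lemma vdeg_class u : vdeg e u = class_deg (cl u).
Proof.
rewrite /vdeg; have -> : [set v | e u v] = [set v | A (cl u) (cl v)] :\ u.
  by apply/setP => v; rewrite !inE eE eq_sym.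
by rewrite /class_deg -card_preim_class (cardsD1 u [set v | _]) inE addKn.
Qed.

Lemma sombor_matrix_class (R : realType) :
  sombor_matrix R e = class_mx cl (class_sombor_mx R).
Proof.
apply/matrixP => i j; rewrite !mxE eE (inj_eq enum_val_inj) !vdeg_class.
by case: eqVneq.
Qed.

End ClassGraph.

Definition dihedral_gens {gT : finGroupType} (n : nat) (x y : gT) :=
  [/\ #|gT| = n.*2, #[x]%g = n, (x ^ y = x^-1)%g, (y * y = 1)%g &
      forall g, g \notin <[x]>%g -> exists2 r, r \in <[x]>%g & g = (r * y)%g].

Definition dihedral_class {gT : finGroupType} (x g : gT) : 'I_3 :=
  if g == 1%g then 0%R else if g \in <[x]>%g then 1%R else 2%R.

Definition odd_dihedral_class_adj : rel 'I_3 :=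
  fun a b => [|| a == 0%R, b == 0%R | a == b].

Section DihedralGroup.
Local Close Scope ring_scope.
Local Open Scope group_scope.

Lemma exists_dihedral_gens n : 1 < n -> exists x y : 'D_(n.*2), dihedral_gens n x y.
Proof.
move=> n_gt1; have := isoGrp_hom (Grp_dihedral n_gt1).
case/existsP => -[x y] /= /eqP [defD xn y2 xy].
have nXY : <[y]> \subset 'N(<[x]>) by rewrite norms_cycle xy groupV cycle_id.
have defD' : <[x]> * <[y]> = [set: 'D_n.*2] by rewrite -norm_joinEr.
have cardD : #|[set: 'D_n.*2]| = n.*2 by exact: card_dihedral.
have oy : #[y] <= 2 by rewrite dvdn_leq // order_dvdn y2.
have ox : #[x] = n.
  apply/eqP; rewrite eqn_leq dvdn_leq ?(ltnW n_gt1) ?order_dvdn ?xn //=.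
  have := mul_cardG <[x]> <[y]>; rewrite defD' cardD -!orderE => card_eq.
  have XY_gt0 : 0 < #|<[x]> :&: <[y]>| by apply/card_gt0P; exists 1%g; rewrite group1.
  have : n.*2 <= #[x] * 2 by rewrite (leq_trans _ (leq_mul (leqnn _) oy)) // card_eq leq_pmulr.
  by rewrite muln2 leq_double.
exists x, y; split => //; first by rewrite -cardsT.
move=> g gx; have : g \in <[x]> * <[y]> by rewrite defD' inE.
case/mulsgP => r s rx /cycleP [i ->] def_g.
rewrite def_g -(expg_mod _ y2) in gx *; have : i %% 2 < 2 by rewrite ltn_pmod.
case: (i %% 2) gx => [|[|//]] gx _; last by exists r; rewrite ?expg1.
by rewrite expg0 mulg1 rx in gx.
Qed.

Variable gT : finGroupType.

Lemma involution_order (g : gT) : g != 1 -> g * g = 1 -> #[g] = 2.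
Proof. by move=> g1 gg; apply: nt_prime_order => //; rewrite expgS expg1. Qed.

Lemma cycle_commute (x a b : gT) : a \in <[x]> -> b \in <[x]> -> commute a b.
Proof. by move=> /cycleP [i ->] /cycleP [j ->]; apply: commuteX2. Qed.

Variables (n : nat) (x y : gT).
Hypothesis Dxy : dihedral_gens n x y.

Lemma card_dihedral_rot : #|<[x]>| = n.
Proof. by case: Dxy => _ ox _ _ _; rewrite -orderE. Qed.

Lemma card_dihedral_refl : #|~: <[x]>| = n.
Proof.
have [card_gT _ _ _ _] := Dxy; apply/eqP.
by rewrite cardsCs setCK card_dihedral_rot card_gT -addnn addnK.
Qed.

Lemma dihedral_conj_rot r : r \in <[x]> -> r ^ y = r^-1.
Proof. by case: Dxy => _ _ xy _ _ /cycleP [i ->]; rewrite conjXg xy expgVn. Qed.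

Lemma dihedral_refl_order g : g \notin <[x]> -> #[g] = 2.
Proof.
move=> gx; have [_ _ _ yy refl] := Dxy; have [r rx eg] := refl g gx.
apply: involution_order; first by apply: contraNneq gx => ->; rewrite group1.
have yV : y^-1 = y by apply/eqP; rewrite eq_invg_mul yy.
by rewrite eg -mulgA -{1}yV -conjgE dihedral_conj_rot // mulgV.
Qed.

Lemma dihedral_rot_commute_refl r g : r \in <[x]> -> g \notin <[x]> ->
  commute r g <-> r * r = 1.
Proof.
move=> rx gx; have [_ _ _ _ refl] := Dxy; have [s sx ->] := refl g gx.
have rs : commute r s := cycle_commute rx sx.
have <- : commute r y <-> r * r = 1.
  split=> [/commgP/conjg_fixP | rr].
    by rewrite dihedral_conj_rot // => rV; rewrite -{1}rV mulVg.
  by apply/commgP/conjg_fixP; rewrite dihedral_conj_rot //; apply/eqP; rewrite eq_invg_mul rr.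
split=> [rsy | ry]; last exact: commuteM.
by have := commuteM (commuteV rs) rsy; rewrite mulKg.
Qed.

Section Odd.
Hypothesis odd_n : odd n.

Lemma dihedral_odd_rotE a : (a \in <[x]>) = (#[a] != 2).
Proof.
apply/idP/idP => [ax | o2]; last by apply: contraR o2 => /dihedral_refl_order ->.
apply: contraTneq (odd_n) => o2; have := order_dvdG ax.
by rewrite o2 card_dihedral_rot dvdn2 => ->.
Qed.

Lemma dihedral_odd_rot_not_commute a b :
  a \in <[x]> -> a != 1 -> b \notin <[x]> -> ~ commute a b.
Proof.
move=> ax a1 bx /(dihedral_rot_commute_refl ax bx) aa.
by move: ax; rewrite dihedral_odd_rotE (involution_order a1 aa).
Qed.

Lemma eq_dihedral_class g h : #[g] = #[h] -> dihedral_class x g = dihedral_class x h.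
Proof. by move=> o; rewrite /dihedral_class -!order_eq1 !dihedral_odd_rotE o. Qed.

Lemma commute_dihedral_class_adj g h :
  commute g h -> odd_dihedral_class_adj (dihedral_class x g) (dihedral_class x h).
Proof.
move=> gh; rewrite /odd_dihedral_class_adj /dihedral_class.
have [//|g1] := eqVneq g 1; have [|h1] := eqVneq h 1; first by rewrite orbT.
case: (boolP (g \in _)) => gx; case: (boolP (h \in _)) => hx //.
  by case: (dihedral_odd_rot_not_commute gx g1 hx).
by case: (dihedral_odd_rot_not_commute hx h1 gx); apply: commute_sym.
Qed.

Lemma dihedral_class_adj_commute g h :
    odd_dihedral_class_adj (dihedral_class x g) (dihedral_class x h) ->
  #[g] = #[h] \/ commute g h.
Proof.
rewrite /odd_dihedral_class_adj /dihedral_class.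
have [-> _|g1] := eqVneq g 1; first by right; apply/commute_sym/commute1.
have [-> _|h1] := eqVneq h 1; first by right; apply: commute1.
case: (boolP (g \in _)) => gx; case: (boolP (h \in _)) => hx // _.
  by right; exact: cycle_commute gx hx.
by left; rewrite !dihedral_refl_order.
Qed.

Lemma osc_adj_dihedral_odd g h :
  osc_adj g h = (g != h) && odd_dihedral_class_adj (dihedral_class x g) (dihedral_class x h).
Proof.
rewrite /osc_adj; case: eqVneq => //= g_neq_h; apply/idP/idP.
  case/orP => [/eqP/eq_dihedral_class -> | /existsP [g' /existsP [h']]].
    by rewrite /odd_dihedral_class_adj eqxx !orbT.
  case/and4P => /eqP/eq_dihedral_class <- /eqP/eq_dihedral_class <- /eqP gh _.
  exact: commute_dihedral_class_adj.
case/dihedral_class_adj_commute => [-> | gh]; first by rewrite eqxx.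
by apply/orP; right; apply/existsP; exists g; apply/existsP; exists h; rewrite !eqxx gh eqxx.
Qed.

End Odd.

Lemma card_dihedral_class c :
  #|[set g | dihedral_class x g == c]| = nth 0%N [:: 1%N; n - 1; n] c.
Proof.
case: c => -[|[|[|//]]] c_lt3 /=.
- rewrite -[RHS](cards1 (1 : gT)); apply: eq_card => g.
  by rewrite !inE /dihedral_class; case: (g =P 1) => // _; case: ifP.
- rewrite -card_dihedral_rot (cardsD1 1 <[x]>) group1 addKn; apply: eq_card => g.
  by rewrite !inE /dihedral_class; case: (g =P 1) => //= _; case: ifP.
- rewrite -card_dihedral_refl; apply: eq_card => g; rewrite !inE /dihedral_class.
  by case: (g =P 1) => [->|_]; rewrite ?group1 //; case: ifP.
Qed.

Lemma odd_dihedral_class_deg c :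
  class_deg (dihedral_class x) odd_dihedral_class_adj c = nth 0%N [:: 2 * n - 1; n - 1; n] c.
Proof.
rewrite /class_deg big_mkcond !big_ord_recl big_ord0 /= !card_dihedral_class.
by case: c => -[|[|[|//]]] c_lt3; rewrite /odd_dihedral_class_adj /=; lia.
Qed.

Section Even.
Hypotheses (even_n : ~~ odd n) (n_gt1 : 1 < n).

Lemma dihedral_even_central_involution : exists2 z : gT, #[z] = 2 & forall a, commute z a.
Proof.
have [_ ox _ _ _] := Dxy; pose z := x ^+ n./2.
have zx : z \in <[x]> by rewrite mem_cycle.
have zz : z * z = 1 by rewrite -expgD addnn even_halfK // -ox expg_order.
exists z => [|a].
  apply: involution_order zz; rewrite -order_dvdn ox.
  have half_n_gt0 : 0 < n./2 by rewrite half_gt0.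
  by apply/negP => /(dvdn_leq half_n_gt0); have := even_halfK even_n; lia.
case: (boolP (a \in <[x]>)) => ax; first exact: cycle_commute zx ax.
exact/(dihedral_rot_commute_refl zx ax).
Qed.

Lemma osc_adj_dihedral_even (g h : gT) : osc_adj g h = (g != h).
Proof.
rewrite /osc_adj; case: eqVneq => //= g_neq_h; case: eqVneq => //= /eqP ogh.
suff [g' [h' [og' oh' gh' ne']]] : exists g' h' : gT,
    [/\ #[g'] = #[g], #[h'] = #[h], commute g' h' & g' != h'].
  by apply/existsP; exists g'; apply/existsP; exists h'; rewrite og' oh' gh' ne' !eqxx.
have [z oz cz] := dihedral_even_central_involution.
have [og | og] := eqVneq #[g] 2.
  exists z, h; split=> //; first by rewrite oz og.
  by apply/eqP => zh; apply: ogh; rewrite -zh og oz.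
have [oh | oh] := eqVneq #[h] 2.
  exists g, z; split=> //; [by rewrite oz oh | exact/commute_sym | ].
  by apply/eqP => gz; apply: ogh; rewrite gz oh oz.
have rot a : #[a] != 2 -> a \in <[x]> by apply: contraR => /dihedral_refl_order ->.
by exists g, h; split=> //; apply: cycle_commute (rot g og) (rot h oh).
Qed.

End Even.
End DihedralGroup.

Lemma char_poly_sombor_dihedral_even (R : realType) n (x y : 'D_(n.*2)) :
    dihedral_gens n x y -> (1 < n)%N -> ~~ odd n ->
  char_poly (sombor_matrix R (@osc_adj 'D_(n.*2))) =
    ('X + ((2 * n - 1)%N%:R * Num.sqrt 2)%:P) ^+ (2 * n - 1)
    * ('X - (((2 * n - 1) ^ 2)%N%:R * Num.sqrt 2)%:P).
Proof.
move=> Dxy n_gt1 even_n.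
pose cl := fun _ : 'D_(n.*2) => ord0 : 'I_1; pose A : rel 'I_1 := [rel _ _ | true].
have adjE u v : osc_adj u v = (u != v) && A (cl u) (cl v).
  by rewrite (osc_adj_dihedral_even Dxy) // andbT.
have csize c : #|[set u | cl u == c]| = n.*2.
  have [card_D _ _ _ _] := Dxy.
  by rewrite ord1 -[RHS]card_D -cardsT; apply: eq_card => u; rewrite !inE.
have deg : class_deg cl A ord0 = (2 * n - 1)%N.
  by rewrite /class_deg big_mkcond big_ord1 /= csize -mul2n.
rewrite (sombor_matrix_class adjE) char_poly_class_mx => [|c]; last first.
  by rewrite csize double_gt0 ltnW.
set K := class_sombor_mx cl A R.
have Kcc c : K c c = (2 * n - 1)%N%:R * Num.sqrt 2 by rewrite class_sombor_mx_diag // ord1 deg.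
clearbody K.
rewrite big_ord1 char_poly_mx11 /quotient_mx mul_mx_diag !mxE /= csize !Kcc.
rewrite (_ : n.*2 = (2 * n - 1).+1)%N; last by lia.
by rewrite natrX -natr1 mulr1n; congr (_ * ('X - _%:P)); ring.
Qed.

Section OddDihedral.
Variables (R : realType) (n : nat) (x y : 'D_(n.*2)).
Hypotheses (Dxy : dihedral_gens n x y) (n_ge3 : (3 <= n)%N) (odd_n : odd n).
Let N : R := n%:R.
Let s2 : R := Num.sqrt 2.
Let K := class_sombor_mx (dihedral_class x) odd_dihedral_class_adj R.

Let natr_n1 : (n - 1)%N%:R = N - 1.
Proof. by rewrite natrB //; lia. Qed.

Lemma sombor_dihedral_odd_diag c :
  K c c = (nth 0%N [:: (2 * n - 1)%N; (n - 1)%N; n] c)%:R * s2.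
Proof.
rewrite class_sombor_mx_diag ?(odd_dihedral_class_deg Dxy) //.
by rewrite /odd_dihedral_class_adj eqxx !orbT.
Qed.

Lemma char_poly_sombor_quotient_dihedral_odd :
  char_poly (quotient_mx (dihedral_class x) K) =
    'X * ('X - ((N - 1) * (N - 2) * s2)%:P) * ('X - (N * (N - 1) * s2)%:P)
    - ((N - 1) * (5 * N ^+ 2 - 6 * N + 2))%:P * ('X - (N * (N - 1) * s2)%:P)
    - (N * (5 * N ^+ 2 - 4 * N + 1))%:P * ('X - ((N - 1) * (N - 2) * s2)%:P).
Proof.
apply: (@eq_poly_gt _ 0) => t _; rewrite horner_char_poly; set cubic := _.[t].
rewrite det_mx33 /quotient_mx mul_mx_diag !mxE /=.
rewrite !(odd_dihedral_class_deg Dxy) !(card_dihedral_class Dxy) /= !sqrt_sqr_dbl ?ler0n //.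
have natr_2n1 : (2 * n - 1)%N%:R = 2 * N - 1 by rewrite natrB ?natrM //; lia.
rewrite {}/cubic !(hornerD, hornerN, hornerM, hornerX, hornerC) natr_n1 natr_2n1.
rewrite !(addrC _ ((2 * N - 1) ^+ 2)).
have sqr_sqrt a b : Num.sqrt (a ^+ 2 + b ^+ 2) ^+ 2 = a ^+ 2 + b ^+ 2 :> R.
  by rewrite sqr_sqrtr // addr_ge0 ?sqr_ge0.
have := sqr_sqrt (2 * N - 1) (N - 1); have := sqr_sqrt (2 * N - 1) N.
rewrite -/N -/s2 => e1 e2; ring: e1 e2.
Qed.

Lemma char_poly_sombor_dihedral_odd :
  char_poly (sombor_matrix R (@osc_adj 'D_(n.*2))) =
       ('X + ((n - 1)%N%:R * s2)%:P) ^+ (n - 2)%N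
     * ('X + (n%:R * s2)%:P) ^+ (n - 1)%N
     * ('X * ('X - (((n - 1) * (n - 2))%N%:R * s2)%:P)
           * ('X - ((n * (n - 1))%N%:R * s2)%:P)
        - ((n - 1) * (5 * n ^ 2 - 6 * n + 2))%N%:R%:P
            * ('X - ((n * (n - 1))%N%:R * s2)%:P)
        - (n * (5 * n ^ 2 - 4 * n + 1))%N%:R%:P
            * ('X - (((n - 1) * (n - 2))%N%:R * s2)%:P)).
Proof.
have natr_n12 : ((n - 1) * (n - 2))%N%:R = (N - 1) * (N - 2) by rewrite natrM !natrB //; lia.
have natr_nn1 : (n * (n - 1))%N%:R = N * (N - 1) by rewrite natrM natrB //; lia.
have natr_cubic1 : ((n - 1) * (5 * n ^ 2 - 6 * n + 2))%N%:R = (N - 1) * (5 * N ^+ 2 - 6 * N + 2).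
  by rewrite natrM natrD natrB ?natrB ?natrM ?natrX //; lia.
have natr_cubic2 : (n * (5 * n ^ 2 - 4 * n + 1))%N%:R = N * (5 * N ^+ 2 - 4 * N + 1).
  by rewrite natrM natrD natrB ?natrM ?natrX //; lia.
rewrite natr_n12 natr_nn1 natr_cubic1 natr_cubic2 natr_n1 -char_poly_sombor_quotient_dihedral_odd.
rewrite (sombor_matrix_class (osc_adj_dihedral_odd Dxy odd_n)) -/K char_poly_class_mx; last first.
  by move=> c; rewrite (card_dihedral_class Dxy); case: c => -[|[|[|]]] //= _; lia.
rewrite !big_ord_recl big_ord0 !(card_dihedral_class Dxy) !sombor_dihedral_odd_diag /=.
by rewrite natr_n1 expr0 mul1r mulr1 -subnS -subn1.
Qed.

End OddDihedral.

Unset Implicit Arguments.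

Theorem corollary4p4 (R : realType) (n : nat) : (3 <= n)%N ->
  let S := sombor_matrix R (@osc_adj 'D_(n.*2)) in
  let s2 : R := Num.sqrt 2 in
  (odd n ->
     char_poly S =
       ('X + ((n - 1)%N%:R * s2)%:P) ^+ (n - 2)%N
     * ('X + (n%:R * s2)%:P) ^+ (n - 1)%N
     * ('X * ('X - (((n - 1) * (n - 2))%N%:R * s2)%:P)
           * ('X - ((n * (n - 1))%N%:R * s2)%:P)
        - ((n - 1) * (5 * n ^ 2 - 6 * n + 2))%N%:R%:P
            * ('X - ((n * (n - 1))%N%:R * s2)%:P)
        - (n * (5 * n ^ 2 - 4 * n + 1))%N%:R%:P
            * ('X - (((n - 1) * (n - 2))%N%:R * s2)%:P)))
  /\
  (~~ odd n ->
     char_poly S =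
       ('X + ((2 * n - 1)%N%:R * s2)%:P) ^+ (2 * n - 1)%N
     * ('X - (((2 * n - 1) ^ 2)%N%:R * s2)%:P)).
Proof.
move=> n_ge3 S s2; have n_gt1 : (1 < n)%N by lia.
have [x [y Dxy]] := exists_dihedral_gens n_gt1.
split=> [odd_n | even_n].
  exact: char_poly_sombor_dihedral_odd Dxy n_ge3 odd_n.
exact: char_poly_sombor_dihedral_even Dxy n_gt1 even_n.
Qed.
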